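(* For every extreme point $(x,y,z)$ of the polyhedron GVC-LP, the vector $x$ is half-integral, i.e. $x_i\in\{0,\tfrac12,1\}$ for all $i\in V$.
   Context: Let $G=(V,E)$ be a graph. GVC-LP is the linear programming relaxation of the following mixed integer formulation of the generalized vertex cover problem (objective: minimize $\sum_{i\in V}c_ix_i+\sum_{(i,j)\in E}(q^2_{ij}-q^1_{ij})y_{ij}+\sum_{(i,j)\in E}(q^0_{ij}-q^1_{ij})z_{ij}$), with variables $x_i$ ($i\in V$), $y_{ij},z_{ij}$ ($(i,j)\in E$) and constraints: $x_i+x_j\le 1+y_{ij}$, $x_i\ge y_{ij}$, $x_j\ge y_{ij}$, $z_{ij}=1-x_i-x_j+y_{ij}$, $y_{ij}\ge 0$ for all $(i,j)\in E$, and $x_i\in\{0,1\}$, $z_{ij}\in\{0,1\}$. In GVC-LP the integrality constraints are replaced by $0\le x_i\le 1$ and $0\le z_{ij}\le 1$. Extreme points refer to the feasible region of GVC-LP. *)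

From mathcomp Require Import all_boot all_order all_algebra.
Set Implicit Arguments. Unset Strict Implicit. Unset Printing Implicit Defensive.
Import Order.TTheory GRing.Theory Num.Theory.
Local Open Scope ring_scope.

(* A finite simple graph G = (V, E): the edge set E is a set of ordered pairs
   (i,j) (each undirected edge listed once, in one orientation), with no loops. *)
Definition simple_edge_set (V : finType) (E : {set V * V}) : Prop :=
  (forall p, p \in E -> p.1 != p.2) /\
  (forall p, p \in E -> (p.2, p.1) \notin E).

Definition edge (V : finType) (E : {set V * V}) := {p : V * V | p \in E}.

Definition GVC_LP (R : realFieldType) (V : finType) (E : {set V * V})
    (x : V -> R) (y z : edge E -> R) : Prop :=
  (forall i, 0 <= x i <= 1) /\
  (forall e : edge E,
     let i := (val e).1 in let j := (val e).2 in
     [/\ x i + x j <= 1 + y e, y e <= x i, y e <= x j & 0 <= y e] /\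
     (z e = 1 - x i - x j + y e /\ 0 <= z e <= 1)).

Definition GVC_extreme (R : realFieldType) (V : finType) (E : {set V * V})
    (x : V -> R) (y z : edge E -> R) : Prop :=
  GVC_LP x y z /\
  forall (x1 x2 : V -> R) (y1 y2 z1 z2 : edge E -> R) (lam : R),
    GVC_LP x1 y1 z1 -> GVC_LP x2 y2 z2 -> 0 < lam < 1 ->
    (forall i, x i = lam * x1 i + (1 - lam) * x2 i) ->
    (forall e, y e = lam * y1 e + (1 - lam) * y2 e) ->
    (forall e, z e = lam * z1 e + (1 - lam) * z2 e) ->
    (forall i, x1 i = x2 i) /\ (forall e, y1 e = y2 e) /\ (forall e, z1 e = z2 e).

(* An extreme point has every y_e at an end of its Fréchet interval
   [max(0, x_i + x_j - 1), min(x_i, x_j)], since otherwise y_e alone could be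
   moved both ways.  Such a point is determined by x and the choice of an end
   for each edge, and this choice is preserved by any nondecreasing map f of
   [0, 1] with f(1 - t) = 1 - f(t).  The maps t |-> t +- t(1 - t)(1 - 2t) are
   of this kind and average to the identity, so x is the midpoint of two
   feasible points, which must then coincide; they differ unless every x_i is
   a root of t(1 - t)(1 - 2t). *)

From mathcomp Require Import all_boot all_order all_algebra.
From mathcomp Require Import ring lra.
Import Order.TTheory GRing.Theory Num.Theory.
Set Implicit Arguments. Unset Strict Implicit.
Local Open Scope ring_scope.

Section SelfDualMonotone.
Variable R : realFieldType.

Definition self_dual_monotone (f : R -> R) : Prop :=
  [/\ f 0 = 0,
      forall a b, 0 <= a -> b <= 1 -> a <= b -> f a <= f b
    & forall t, f (1 - t) = 1 - f t].

Lemma self_dual_monotone_unit (f : R -> R) (t : R) :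
  self_dual_monotone f -> 0 <= t <= 1 -> 0 <= f t <= 1.
Proof.
move=> [f0 f_mono f_dual] /andP[t_ge0 t_le1].
have f1 : f 1 = 1 by rewrite -[1]subr0 f_dual f0.
by rewrite -{1}f0 -{1}f1 !f_mono ?lexx.
Qed.

(* Fréchet bounds on P(A ∩ B) given P(A) = a and P(B) = b. *)
Definition frechet_lo (a b : R) : R := Num.max 0 (a + b - 1).
Definition frechet_hi (a b : R) : R := Num.min a b.

Lemma frechet_boundsP (a b y : R) :
  [/\ a + b <= 1 + y, y <= a, y <= b & 0 <= y] <->
  frechet_lo a b <= y <= frechet_hi a b.
Proof.
rewrite /frechet_lo /frechet_hi ge_max le_min; split.
- by move=> [h1 h2 h3 h4]; rewrite h2 h3 h4 /=; lra.
- by move=> /andP[/andP[h4 h1] /andP[h2 h3]]; split=> //; lra.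
Qed.

Lemma frechet_lo_le_hi (a b : R) :
  0 <= a <= 1 -> 0 <= b <= 1 -> frechet_lo a b <= frechet_hi a b.
Proof.
by move=> /andP[a_ge0 a_le1] /andP[b_ge0 b_le1];
  rewrite /frechet_lo /frechet_hi ge_max !le_min a_ge0 b_ge0 /=; lra.
Qed.

Section FrechetMap.
Variables (f : R -> R) (a b : R).
Hypotheses (f_sd : self_dual_monotone f) (a01 : 0 <= a <= 1) (b01 : 0 <= b <= 1).

Lemma frechet_hi_map : frechet_hi (f a) (f b) = f (frechet_hi a b).
Proof.
have [_ f_mono _] := f_sd; move: a01 b01 => /andP[a_ge0 a_le1] /andP[b_ge0 b_le1].
rewrite /frechet_hi; case: (leP a b) => [le_ab | /ltW le_ba].
- by rewrite !min_l ?f_mono.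
- by rewrite !min_r ?f_mono.
Qed.

Lemma frechet_lo_map :
  frechet_lo (f a) (f b) = if a + b <= 1 then 0 else f a + f b - 1.
Proof.
have [_ f_mono f_dual] := f_sd; move: a01 b01 => /andP[a_ge0 a_le1] /andP[b_ge0 b_le1].
rewrite /frechet_lo; case: leP => [le_ab1 | /ltW le_1ab].
- have := f_mono a (1 - b) a_ge0 (ltac:(lra)) (ltac:(lra)).
  by rewrite f_dual => ?; rewrite max_l //; lra.
- have := f_mono (1 - b) a (ltac:(lra)) a_le1 (ltac:(lra)).
  by rewrite f_dual => ?; rewrite max_r //; lra.
Qed.

End FrechetMap.
End SelfDualMonotone.

Section CubicShift.
Variable R : realFieldType.

Definition cubic_shift (s t : R) : R := t + s * (t * (1 - t) * (1 - 2 * t)).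

Lemma cubic_shift_add (s t : R) : cubic_shift s t + cubic_shift (-s) t = 2 * t.
Proof. rewrite /cubic_shift; ring. Qed.

Lemma cubic_shiftN_eq (s t : R) : s != 0 ->
  cubic_shift s t = cubic_shift (-s) t -> t = 0 \/ t = 2^-1 \/ t = 1.
Proof.
move=> s_neq0 eq_shift.
have : s * (t * (1 - t) * (1 - 2 * t)) = 0.
  by apply: (@mulIf _ 2); [lra | move: eq_shift; rewrite /cubic_shift; lra].
move/eqP; rewrite !mulf_eq0 (negPf s_neq0) /= => /orP[/orP[/eqP t0 | ] | ].
- by left.
- by rewrite subr_eq0 => /eqP <-; right; right.
- by move/eqP => h; right; left; lra.
Qed.

Lemma cubic_shift_self_dual (s : R) : `|s| <= 1 -> self_dual_monotone (cubic_shift s).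
Proof.
move=> /ler_normlP[s_ge s_le]; split.
- by rewrite /cubic_shift; ring.
- move=> a b a_ge0 b_le1 le_ab.
  have a_le1 : a <= 1 by lra.
  have b_ge0 : 0 <= b by lra.
  (* [h] is the divided difference of t(1-t)(1-2t) over [a, b]. *)
  pose h := 1 - 3 * (a + b) + 2 * (a * a + a * b + b * b).
  have h_ge : -2^-1 <= h.
    have := sqr_ge0 (a - 2^-1 + (b - 2^-1)); have := sqr_ge0 (a - 2^-1);
    have := sqr_ge0 (b - 2^-1); rewrite /h; nra.
  have h_le : h <= 1.
    have := mulr_ge0 a_ge0 (ltac:(lra) : 0 <= 3 - 2 * a - b).
    have := mulr_ge0 b_ge0 (ltac:(lra) : 0 <= 3 - a - 2 * b).
    rewrite /h; nra.
  have -> : cubic_shift s b = cubic_shift s a + (b - a) * (1 + s * h).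
    by rewrite /cubic_shift /h; ring.
  rewrite lerDl; apply: mulr_ge0; first lra.
  nra.
- by move=> t; rewrite /cubic_shift; ring.
Qed.

End CubicShift.

Section GVCExtremePoints.
Variables (R : realFieldType) (V : finType) (E : {set V * V}).
Implicit Types (x : V -> R) (y z : edge E -> R).

Definition y_lower x (e : edge E) : R := frechet_lo (x (val e).1) (x (val e).2).
Definition y_upper x (e : edge E) : R := frechet_hi (x (val e).1) (x (val e).2).
Definition gvc_z x y (e : edge E) : R := 1 - x (val e).1 - x (val e).2 + y e.

Lemma GVC_LPE x y z :
  GVC_LP x y z <->
  [/\ forall i, 0 <= x i <= 1,
      forall e, y_lower x e <= y e <= y_upper x e
    & forall e, z e = gvc_z x y e].
Proof.
split.
- move=> [x01 x_edge]; split=> // e; have [y_edge [z_eq _]] := x_edge e.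
  + exact/frechet_boundsP.
  + exact: z_eq.
- move=> [x01 y_bounds z_eq]; split=> // e.
  have /frechet_boundsP[y1 y2 y3 y4] := y_bounds e.
  have /andP[a_ge0 _] := x01 (val e).1; have /andP[b_ge0 _] := x01 (val e).2.
  by split=> //; rewrite z_eq /gvc_z; split=> //; apply/andP; split; lra.
Qed.

Lemma GVC_extreme_midpoint x y z x1 y1 z1 x2 y2 z2 :
  GVC_extreme x y z -> GVC_LP x1 y1 z1 -> GVC_LP x2 y2 z2 ->
  (forall i, x1 i + x2 i = 2 * x i) -> (forall e, y1 e + y2 e = 2 * y e) ->
  (forall i, x1 i = x2 i) /\ (forall e, y1 e = y2 e).
Proof.
move=> [/GVC_LPE[_ _ z_eq] ext] lp1 lp2 x_mid y_mid.
have /GVC_LPE[_ _ z1_eq] := lp1; have /GVC_LPE[_ _ z2_eq] := lp2.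
have x_comb i : x i = 2^-1 * x1 i + (1 - 2^-1) * x2 i by have := x_mid i; lra.
have y_comb e : y e = 2^-1 * y1 e + (1 - 2^-1) * y2 e by have := y_mid e; lra.
have z_comb e : z e = 2^-1 * z1 e + (1 - 2^-1) * z2 e.
  rewrite z_eq z1_eq z2_eq /gvc_z.
  by have := x_mid (val e).1; have := x_mid (val e).2; have := y_mid e; lra.
have half : 0 < (2^-1 : R) < 1 by apply/andP; split; lra.
by have [? [? _]] := ext x1 x2 y1 y2 z1 z2 2^-1 lp1 lp2 half x_comb y_comb z_comb.
Qed.

Lemma GVC_extreme_y_endpoint x y z e :
  GVC_extreme x y z -> y e = y_lower x e \/ y e = y_upper x e.
Proof.
move=> ext; have [/GVC_LPE[x01 y_bounds _] _] := ext.
have /andP[lo_y y_hi] := y_bounds e.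
case: (eqVneq (y e) (y_lower x e)) => [|ne_lo]; first by left.
case: (eqVneq (y e) (y_upper x e)) => [|ne_hi]; first by right.
have lt_lo : y_lower x e < y e by rewrite lt_neqAle eq_sym ne_lo.
have lt_hi : y e < y_upper x e by rewrite lt_neqAle ne_hi.
pose d := Num.min (y e - y_lower x e) (y_upper x e - y e).
have d_gt0 : 0 < d by rewrite lt_min !subr_gt0 lt_lo lt_hi.
have [d_lo d_hi] : d <= y e - y_lower x e /\ d <= y_upper x e - y e.
  by rewrite !ge_min !lexx orbT.
pose y_shift t e' := if e' == e then y e + t else y e'.
have feasible t : -d <= t <= d -> GVC_LP x (y_shift t) (gvc_z x (y_shift t)).
  move=> /andP[t_ge t_le]; apply/GVC_LPE; split=> // e'.
  rewrite /y_shift; case: eqP => [->|_]; last exact: y_bounds.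
  by apply/andP; split; lra.
have same_x i : x i + x i = 2 * x i by lra.
have y_mid e' : y_shift d e' + y_shift (-d) e' = 2 * y e'.
  by rewrite /y_shift; case: eqP => [->|_]; lra.
have [d_in Nd_in] : -d <= d <= d /\ -d <= -d <= d by rewrite !lexx andbT /=; lra.
have [_ /(_ e)] := GVC_extreme_midpoint ext (feasible d d_in) (feasible _ Nd_in) same_x y_mid.
by rewrite /y_shift eqxx; lra.
Qed.

Definition lift_y x (c : edge E -> bool) (e : edge E) : R :=
  if c e then y_upper x e else y_lower x e.

Lemma GVC_extreme_lift x y z :
  GVC_extreme x y z -> exists c, forall e, y e = lift_y x c e.
Proof.
move=> ext; exists (fun e => y e == y_upper x e) => e; rewrite /lift_y.
case: eqVneq => [// | ne_hi].
by case: (GVC_extreme_y_endpoint e ext) => // eq_hi; rewrite eq_hi eqxx in ne_hi.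
Qed.

Lemma GVC_LP_lift x c :
  (forall i, 0 <= x i <= 1) -> GVC_LP x (lift_y x c) (gvc_z x (lift_y x c)).
Proof.
move=> x01; apply/GVC_LPE; split=> // e.
have le_lo_hi := frechet_lo_le_hi (x01 (val e).1) (x01 (val e).2).
by rewrite /lift_y; case: (c e); rewrite lexx ?andbT.
Qed.

Lemma lift_y_compD (f g : R -> R) x c e :
  self_dual_monotone f -> self_dual_monotone g -> (forall t, f t + g t = 2 * t) ->
  (forall i, 0 <= x i <= 1) ->
  lift_y (f \o x) c e + lift_y (g \o x) c e = 2 * lift_y x c e.
Proof.
move=> f_sd g_sd fgD x01; have a01 := x01 (val e).1; have b01 := x01 (val e).2.
rewrite /lift_y /y_upper /y_lower /=; case: (c e).
- by rewrite !frechet_hi_map.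
- rewrite !frechet_lo_map // /frechet_lo; case: leP => [le_ab1 | lt_1ab].
  + by rewrite max_l ?mulr0 ?addr0 //; lra.
  + have := fgD (x (val e).1); have := fgD (x (val e).2).
    by rewrite max_r //; lra.
Qed.

End GVCExtremePoints.

Theorem theorem5 (R : realFieldType) (V : finType) (E : {set V * V})
    (HE : simple_edge_set E) (x : V -> R) (y z : edge E -> R) :
  GVC_extreme x y z ->
  forall i : V, x i = 0 \/ x i = 2^-1 \/ x i = 1.
Proof.
move=> ext i; have [/GVC_LPE[x01 _ _] _] := ext.
have [c y_lift] := GVC_extreme_lift ext.
have norm1 : `|1 : R| <= 1 by rewrite normr1.
have normN1 : `|-1 : R| <= 1 by rewrite normrN normr1.
have shift_LP (s : R) : `|s| <= 1 ->
    GVC_LP (cubic_shift s \o x) (lift_y (cubic_shift s \o x) c)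
      (gvc_z (cubic_shift s \o x) (lift_y (cubic_shift s \o x) c)).
  move=> s_le1; apply: GVC_LP_lift => j.
  exact: self_dual_monotone_unit (cubic_shift_self_dual s_le1) _.
have x_mid j : cubic_shift 1 (x j) + cubic_shift (-1) (x j) = 2 * x j.
  exact: cubic_shift_add.
have y_mid e :
    lift_y (cubic_shift 1 \o x) c e + lift_y (cubic_shift (-1) \o x) c e = 2 * y e.
  rewrite y_lift; apply: lift_y_compD x01; last exact: cubic_shift_add.
  - exact: cubic_shift_self_dual norm1.
  - exact: cubic_shift_self_dual normN1.
have [eq_shift _] := GVC_extreme_midpoint ext (shift_LP _ norm1) (shift_LP _ normN1) x_mid y_mid.
exact: cubic_shiftN_eq (oner_neq0 R) (eq_shift i).
Qed.
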